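(* Let $G$ be a transient network and let $A$ be a set of vertices for which there exist $\varepsilon>0$ and infinitely many pairwise disjoint sets $A_1,A_2,\ldots\subseteq A$ with $\operatorname{Cap}(A_i)\ge\varepsilon$ for every $i\ge1$. Then $\operatorname{Cap}(A)=\infty$.
   Context: A network is a connected locally finite graph $G=(V,E)$ with conductances $c:E\to(0,\infty)$; its random walk moves along an incident edge chosen with probability proportional to conductance, and $G$ is transient if this walk is transient. With $c(v)=\sum_{e^-=v}c(e)$ and $\tau_A^+$ the first return time to $A$, the capacity of a finite set $A$ is $\operatorname{Cap}(A)=\sum_{v\in A}c(v)\mathbf P_v(\tau_A^+=\infty)$, and for infinite $A$ it is $\sup\{\operatorname{Cap}(A'):A'\subseteq A\text{ finite}\}$. *)

From HB Require Import structures.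
From mathcomp Require Import all_boot all_order all_algebra.
From mathcomp Require Import all_classical all_reals all_analysis.
Set Implicit Arguments. Unset Strict Implicit. Unset Printing Implicit Defensive.
Import Order.TTheory GRing.Theory Num.Theory.
Import numFieldNormedType.Exports.
Local Open Scope classical_set_scope.
Local Open Scope ring_scope.

Section Network.
Variables (R : realType) (V : choiceType).
Variables (c : V -> V -> R) (nbr : V -> seq V).

Definition is_network : Prop :=
  [/\ (forall x y, 0 <= c x y),
      (forall x y, c x y = c y x),
      (forall x, uniq (nbr x)),
      (forall x y, (0 < c x y) <-> (y \in nbr x)) &
      (forall x y, exists p : seq V,
          path (fun u w => 0 < c u w) x p /\ last x p = y)].

Definition cv (v : V) : R := \sum_(w <- nbr v) c v w.

Definition ptrans (v w : V) : R := c v w / cv v.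

(* avoid A n w = P_w(X_0, ..., X_n all lie outside A) *)
Fixpoint avoid (A : set V) (n : nat) (w : V) : R :=
  if `[< A w >] then 0 else
  match n with
  | 0 => 1
  | n'.+1 => \sum_(u <- nbr w) ptrans w u * avoid A n' u
  end.

(* P_v(tau_A^+ > n+1) = P_v(X_1, ..., X_{n+1} all outside A) *)
Definition no_return_by (A : set V) (v : V) (n : nat) : R :=
  \sum_(u <- nbr v) ptrans v u * avoid A n u.

(* P_v(tau_A^+ = oo), the limit of the nonincreasing sequence above *)
Definition escape (A : set V) (v : V) : R := limn (no_return_by A v).

(* the random walk is transient: every vertex is returned to with prob. < 1 *)
Definition transient : Prop := forall v, 0 < escape [set v] v.

Definition capf (A : set V) : R :=
  \sum_(v \in A) cv v * escape A v.

Definition Cap (A : set V) : \bar R :=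
  if `[< finite_set A >] then (capf A)%:E
  else ereal_sup [set (capf B)%:E | B in [set B | B `<=` A /\ finite_set B]].

End Network.

(* Dirichlet principle: for a finite set F, cap F is the infimum of the energy
   of finitely supported functions equal to 1 on F, and it is approached by the
   probabilities hit F n of hitting F within n steps.  Suppose Cap A = M < oo.
   Take finite pieces b_j of the A_j with cap b_j >= eps/2, a finite F in A with
   cap F within eta of the supremum of the capacities of finite subsets of A,
   and a test function g1 for F of energy <= cap F + eta.  Some b_j misses the
   finite support of g1; let g2 be such a test function for the union of F and
   b_j.  Then (g1 + g2)/2 is a test function for F and g2 - g1 one for b_j, so
   the parallelogram law gives
     cap F + cap b_j / 4 <= (E g1 + E g2) / 2 <= cap F + 3 eta / 2,
   which is absurd for eta = eps/14. *)

From HB Require Import structures.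
From mathcomp Require Import all_boot all_order all_algebra.
From mathcomp Require Import all_classical all_reals all_analysis.
From mathcomp Require Import finmap ring lra.
Import Order.TTheory GRing.Theory Num.Theory.
Import numFieldNormedType.Exports.
Set Implicit Arguments. Unset Strict Implicit. Unset Printing Implicit Defensive.
Local Open Scope classical_set_scope.
Local Open Scope ring_scope.

Lemma big_uniq_supp (T : eqType) (M : nmodType) (s t : seq T) (h : T -> M) :
  uniq s -> uniq t ->
  (forall y, y \notin s -> h y = 0) -> (forall y, y \notin t -> h y = 0) ->
  \sum_(y <- s) h y = \sum_(y <- t) h y.
Proof.
move=> us ut hs ht.
rewrite (bigID (mem t)) /= [X in _ + X]big1 ?addr0; last by move=> y /ht.
rewrite [RHS](bigID (mem s)) /= [X in _ + X]big1 ?addr0; last by move=> y /hs.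
rewrite -[LHS]big_filter -[RHS]big_filter; apply/perm_big/uniq_perm.
- exact: filter_uniq.
- exact: filter_uniq.
- by move=> y; rewrite !mem_filter andbC.
Qed.

Lemma eventually_disjoint (T : eqType) (b : nat -> seq T) (L : seq T) :
  (forall i j x, i != j -> x \in b i -> x \notin b j) ->
  exists J, forall j, (J <= j)%N -> forall x, x \in L -> x \notin b j.
Proof.
move=> b_disj; elim: L => [|y L [J HJ]]; first by exists 0%N.
have [[i yi]|ny] := pselect (exists i, y \in b i).
  exists (maxn J i.+1) => j; rewrite geq_max => /andP[Jj ij] x.
  rewrite in_cons => /orP[/eqP->|xL]; last exact: HJ.
  by apply: (b_disj i); rewrite // neq_ltn ij.
exists J => j Jj x; rewrite in_cons => /orP[/eqP->|xL]; last exact: HJ.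
by apply/negP => yj; apply: ny; exists j.
Qed.

Lemma ubound_almost_max (R : realType) (E : set R) (M eta : R) :
  E !=set0 -> ubound E M -> 0 < eta ->
  exists2 e, E e & forall e', E e' -> e' <= e + eta.
Proof.
move=> E0 EM eta0; have supE : has_sup E by split => //; exists M.
have [e Ee lt_e] := sup_adherent eta0 supE.
by exists e => // e' /(sup_upper_bound supE); lra.
Qed.

Section Network.
Variables (R : realType) (V : choiceType) (c : V -> V -> R) (nbr : V -> seq V).
Hypothesis Hnet : is_network c nbr.

Lemma c_ge0 x y : 0 <= c x y. Proof. by case: Hnet. Qed.
Lemma c_sym x y : c x y = c y x. Proof. by case: Hnet. Qed.
Lemma nbr_uniq x : uniq (nbr x). Proof. by case: Hnet. Qed.
Lemma c_gt0_nbr x y : (0 < c x y) <-> (y \in nbr x). Proof. by case: Hnet. Qed.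

Lemma c_notin_nbr x y : y \notin nbr x -> c x y = 0.
Proof.
move=> yx; apply/eqP; rewrite eq_le c_ge0 andbT leNgt.
by apply: contra yx => /c_gt0_nbr.
Qed.

Lemma nbr_sym x y : (y \in nbr x) = (x \in nbr y).
Proof. by apply/idP/idP => /c_gt0_nbr; rewrite c_sym => /c_gt0_nbr. Qed.

Lemma cv_gt0 x y : x <> y -> 0 < cv c nbr x.
Proof.
have [_ _ _ _ conn] := Hnet; have [[|z p] [/= xzp <-]] := conn x y => [//|_].
case/andP: xzp => cxz _; have zx : z \in nbr x by apply/c_gt0_nbr.
rewrite /cv (big_rem z zx) /=.
have : 0 <= \sum_(w <- rem z (nbr x)) c x w by apply: sumr_ge0 => w _; apply: c_ge0.
lra.
Qed.

Lemma capf_nil : capf c nbr [set` [::]] = 0.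
Proof. by rewrite set_nil /capf fsbig_set0. Qed.

Lemma Cap_inner_approx B r : (r%:E < Cap c nbr B)%E ->
  exists s : seq V, [/\ uniq s, [set` s] `<=` B & r < capf c nbr [set` s]].
Proof.
rewrite /Cap; case: asboolP => [/finite_fsetP[X ->]|_].
  by rewrite lte_fin => ltr; exists X; split => //; apply: fset_uniq.
case/ereal_sup_gt => _ [B' [B'B /finite_fsetP[X B'X]] <-]; rewrite lte_fin => ltr.
by exists X; split; rewrite -?B'X //; apply: fset_uniq.
Qed.

Section Transition.
Hypothesis cv_pos : forall x, 0 < cv c nbr x.

Lemma ptrans_ge0 x y : 0 <= ptrans c nbr x y.
Proof. by rewrite /ptrans divr_ge0 ?c_ge0 ?ltW. Qed.

Lemma ptrans_sum1 x : \sum_(u <- nbr x) ptrans c nbr x u = 1.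
Proof. by rewrite /ptrans -mulr_suml divff ?gt_eqF ?cv_pos. Qed.

Local Notation av F := (avoid c nbr [set` (F : seq V)]).
Local Notation nr F := (no_return_by c nbr [set` (F : seq V)]).
Local Notation cap F := (capf c nbr [set` (F : seq V)]).

Lemma avoid_mem F n x : x \in F -> av F n x = 0.
Proof. by move=> xF; case: n => [|n] /=; rewrite asboolT. Qed.

Lemma avoid0 F x : x \notin F -> av F 0 x = 1.
Proof. by move=> xF /=; rewrite asboolF //; apply/negP. Qed.

Lemma avoidS F n x : x \notin F -> av F n.+1 x = nr F x n.
Proof. by move=> xF /=; rewrite asboolF //; apply/negP. Qed.

Lemma avoid_itv F n x : 0 <= av F n x <= 1.
Proof.
elim: n x => [|n IH] x; have [xF|xF] := boolP (x \in F).
- by rewrite avoid_mem // lexx ler01.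
- by rewrite avoid0 // ler01 lexx.
- by rewrite avoid_mem // lexx ler01.
rewrite avoidS // /no_return_by; apply/andP; split.
  by apply: sumr_ge0 => u _; rewrite mulr_ge0 ?ptrans_ge0 //; case/andP: (IH u).
rewrite -[X in _ <= X](ptrans_sum1 x); apply: ler_sum => u _.
by rewrite ler_piMr ?ptrans_ge0 //; case/andP: (IH u).
Qed.

Lemma avoid_ge0 F n x : 0 <= av F n x. Proof. by case/andP: (avoid_itv F n x). Qed.
Lemma avoid_le1 F n x : av F n x <= 1. Proof. by case/andP: (avoid_itv F n x). Qed.

Lemma avoidSn_le F n x : av F n.+1 x <= av F n x.
Proof.
elim: n x => [|n IH] x; have [xF|xF] := boolP (x \in F).
- by rewrite !avoid_mem.
- by rewrite avoid0 // avoid_le1.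
- by rewrite !avoid_mem.
by rewrite !avoidS // ler_sum // => u _; rewrite ler_wpM2l ?ptrans_ge0.
Qed.

Lemma no_return_by_ge0 F x n : 0 <= nr F x n.
Proof. by rewrite sumr_ge0 // => u _; rewrite mulr_ge0 ?ptrans_ge0 ?avoid_ge0. Qed.

Lemma no_return_bySn_le F x n : nr F x n.+1 <= nr F x n.
Proof. by rewrite ler_sum // => u _; rewrite ler_wpM2l ?ptrans_ge0 ?avoidSn_le. Qed.

Lemma no_return_by_cvg F x : nr F x @ \oo --> escape c nbr [set` F] x.
Proof.
apply: nonincreasing_is_cvgn; first exact/nonincreasing_seqP/no_return_bySn_le.
by exists 0 => _ [n _ <-]; apply: no_return_by_ge0.
Qed.

Fixpoint nbhd (L : seq V) n : seq V :=
  if n is n'.+1 then nbhd L n' ++ flatten [seq nbr u | u <- nbhd L n'] else L.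

Lemma nbhd_sub L n : {subset L <= nbhd L n}.
Proof. by elim: n => [|n IH] //= x /IH; rewrite mem_cat => ->. Qed.

Lemma nbhd_nbr L n u x : u \in nbhd L n -> x \in nbr u -> x \in nbhd L n.+1.
Proof.
move=> uL xu /=; rewrite mem_cat; apply/orP; right; apply/flattenP.
by exists (nbr u) => //; apply/mapP; exists u.
Qed.

Lemma avoid_notin_nbhd F n x : x \notin nbhd F n -> av F n x = 1.
Proof.
elim: n x => [|n IH] x xFn; first by rewrite avoid0.
have xF : x \notin F by apply: contra xFn => /(@nbhd_sub F n.+1).
rewrite avoidS // /no_return_by -(ptrans_sum1 x); apply: eq_big_seq => u ux.
rewrite IH ?mulr1 //; apply: contra xFn => uFn; apply: nbhd_nbr uFn _.
by rewrite -nbr_sym.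
Qed.

Definition hit (F : seq V) n x := 1 - av F n x.

Lemma hit_mem F n x : x \in F -> hit F n x = 1.
Proof. by move=> xF; rewrite /hit avoid_mem ?subr0. Qed.

Definition supported (f : V -> R) (K : seq V) := forall x, f x != 0 -> x \in K.

Lemma supported_notin f K x : supported f K -> x \notin K -> f x = 0.
Proof. by move=> fK xK; apply/eqP; apply: contraNT xK; apply: fK. Qed.

Lemma supported_sub f K K' : supported f K -> {subset K <= K'} -> supported f K'.
Proof. by move=> fK KK' x /fK /KK'. Qed.

Lemma supported_undup_catl f K K' : supported f K -> supported f (undup (K ++ K')).
Proof. by move=> fK; apply: supported_sub fK _ => x; rewrite mem_undup mem_cat => ->. Qed.

Lemma supported_undup_catr f K K' : supported f K' -> supported f (undup (K ++ K')).
Proof.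
by move=> fK'; apply: supported_sub fK' _ => x; rewrite mem_undup mem_cat => ->; rewrite orbT.
Qed.

Lemma supported_lincomb a b f g K : supported f K -> supported g K ->
  supported (fun x => a * f x + b * g x) K.
Proof.
move=> fK gK x; apply: contraR => xK.
by rewrite (supported_notin fK xK) (supported_notin gK xK) !mulr0 addr0.
Qed.

Lemma supported_hit F n : supported (hit F n) (undup (nbhd F n)).
Proof.
move=> x; rewrite mem_undup; apply: contraR => /avoid_notin_nbhd hx.
by rewrite /hit hx subrr.
Qed.

Definition lap (g : V -> R) x := \sum_(y <- nbr x) c x y * (g x - g y).

(* For f supported in K this is the energy form
   1/2 sum_(x, y) c x y (f x - f y) (g x - g y). *)
Definition dirichlet (K : seq V) (f g : V -> R) := \sum_(x <- K) f x * lap g x.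

Local Notation energy K f := (dirichlet K f f).

Lemma dirichlet_supp_eq K K' f g : uniq K -> uniq K' ->
  supported f K -> supported f K' -> dirichlet K f g = dirichlet K' f g.
Proof.
move=> uK uK' fK fK'; apply: big_uniq_supp => // y yK.
  by rewrite (supported_notin fK yK) mul0r.
by rewrite (supported_notin fK' yK) mul0r.
Qed.

Lemma lap_supp K g x : uniq K -> supported g K ->
  lap g x = g x * cv c nbr x - \sum_(y <- K) c x y * g y.
Proof.
move=> uK gK; rewrite /lap /cv mulr_sumr -(@big_uniq_supp _ _ (nbr x) K).
- by rewrite -sumrB; apply: eq_bigr => y _; rewrite mulrBr mulrC.
- exact: nbr_uniq.
- exact: uK.
- by move=> y /c_notin_nbr ->; rewrite mul0r.
- by move=> y /(supported_notin gK) ->; rewrite mulr0.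
Qed.

Lemma dirichlet_expand K f g : uniq K -> supported g K ->
  dirichlet K f g = \sum_(x <- K) f x * g x * cv c nbr x
                    - \sum_(x <- K) \sum_(y <- K) c x y * f x * g y.
Proof.
move=> uK gK; rewrite /dirichlet -sumrB; apply: eq_bigr => x _.
rewrite (lap_supp x uK gK) mulrBr mulrA; congr (_ - _); rewrite mulr_sumr.
by apply: eq_bigr => y _; rewrite mulrA (mulrC (f x)).
Qed.

Lemma dirichlet_sym K f g : uniq K -> supported f K -> supported g K ->
  dirichlet K f g = dirichlet K g f.
Proof.
move=> uK fK gK; rewrite (dirichlet_expand f uK gK) (dirichlet_expand g uK fK).
congr (_ - _); first by apply: eq_bigr => x _; rewrite (mulrC (f x)).
rewrite exchange_big; apply: eq_bigr => x _; apply: eq_bigr => y _.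
by rewrite c_sym mulrAC.
Qed.

Lemma sum_c_le_cv K x : uniq K -> \sum_(y <- K) c x y <= cv c nbr x.
Proof.
move=> uK; pose cK y := if y \in K then c x y else 0.
have -> : \sum_(y <- K) c x y = \sum_(y <- K) cK y.
  by apply: eq_big_seq => y yK; rewrite /cK yK.
rewrite (@big_uniq_supp _ _ K (nbr x)).
- by rewrite /cv ler_sum // => y _; rewrite /cK; case: ifP => // _; apply: c_ge0.
- exact: uK.
- exact: nbr_uniq.
- by move=> y /negbTE; rewrite /cK => ->.
- by move=> y /c_notin_nbr; rewrite /cK => ->; case: ifP.
Qed.

Lemma energy_ge0 K f : uniq K -> supported f K -> 0 <= energy K f.
Proof.
move=> uK fK; rewrite (dirichlet_expand f uK fK) subr_ge0.
have amgm x y : 2 * (c x y * f x * f y) <= c x y * f x ^+ 2 + c x y * f y ^+ 2.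
  by have := mulr_ge0 (c_ge0 x y) (sqr_ge0 (f x - f y)); nra.
have swap : \sum_(x <- K) \sum_(y <- K) c x y * f y ^+ 2 =
            \sum_(x <- K) \sum_(y <- K) c x y * f x ^+ 2.
  by rewrite exchange_big; apply: eq_bigr => x _; apply: eq_bigr => y _; rewrite c_sym.
have : 2 * \sum_(x <- K) \sum_(y <- K) c x y * f x * f y <=
       2 * \sum_(x <- K) \sum_(y <- K) c x y * f x ^+ 2.
  apply: (@le_trans _ _ (\sum_(x <- K) \sum_(y <- K)
                          (c x y * f x ^+ 2 + c x y * f y ^+ 2))).
    rewrite mulr_sumr; apply: ler_sum => x _.
    by rewrite mulr_sumr; apply: ler_sum => y _; apply: amgm.
  under eq_bigr do rewrite big_split /=.
  by rewrite big_split /= swap; lra.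
rewrite ler_pM2l // => /le_trans; apply; apply: ler_sum => x _.
rewrite -mulr_suml mulrC expr2 ler_wpM2l ?sum_c_le_cv //.
by rewrite -expr2 sqr_ge0.
Qed.

Lemma lap_lincomb a b g1 g2 x :
  lap (fun y => a * g1 y + b * g2 y) x = a * lap g1 x + b * lap g2 x.
Proof. by rewrite /lap !mulr_sumr -big_split; apply: eq_bigr => y _ /=; ring. Qed.

Lemma dirichlet_linl K f1 f2 a b g :
  dirichlet K (fun x => a * f1 x + b * f2 x) g =
  a * dirichlet K f1 g + b * dirichlet K f2 g.
Proof.
rewrite /dirichlet !mulr_sumr -big_split.
by apply: eq_bigr => x _ /=; ring.
Qed.

Lemma dirichlet_linr K f g1 g2 a b :
  dirichlet K f (fun x => a * g1 x + b * g2 x) =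
  a * dirichlet K f g1 + b * dirichlet K f g2.
Proof.
rewrite /dirichlet !mulr_sumr -big_split.
by apply: eq_bigr => x _ /=; rewrite lap_lincomb; ring.
Qed.

Lemma energy_parallelogram K f g : uniq K -> supported f K -> supported g K ->
  energy K (fun x => 2^-1 * f x + 2^-1 * g x) +
  energy K (fun x => (-1) * f x + 1 * g x) / 4 = (energy K f + energy K g) / 2.
Proof.
move=> uK fK gK; rewrite !dirichlet_linl !dirichlet_linr (dirichlet_sym uK gK fK).
lra.
Qed.

Lemma lap_hit F n x : lap (hit F n) x = cv c nbr x * (nr F x n - av F n x).
Proof.
have c_ptrans y : c x y = cv c nbr x * ptrans c nbr x y.
  by rewrite /ptrans mulrC divfK ?gt_eqF ?cv_pos.
rewrite mulrBr.
have -> : cv c nbr x * nr F x n = \sum_(y <- nbr x) c x y * av F n y.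
  by rewrite mulr_sumr; apply: eq_bigr => y _; rewrite c_ptrans mulrA.
rewrite /cv mulr_suml -sumrB.
by apply: eq_bigr => y _; rewrite /hit; ring.
Qed.

Definition capf_by (F : seq V) n := \sum_(x <- F) cv c nbr x * nr F x n.

Lemma energy_hit_le F n : uniq F -> energy (undup (nbhd F n)) (hit F n) <= capf_by F n.
Proof.
move=> uF; pose e x := if x \in F then cv c nbr x * nr F x n else 0.
have -> : capf_by F n = \sum_(x <- undup (nbhd F n)) e x.
  rewrite /capf_by (eq_big_seq e) => [|x xF]; last by rewrite /e xF.
  apply: big_uniq_supp => //; rewrite ?undup_uniq // => y; rewrite /e.
    by move/negbTE => ->.
  by rewrite mem_undup => /(contra (@nbhd_sub F n y))/negbTE ->.
apply: ler_sum => x _; rewrite lap_hit /e; case: ifPn => xF.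
  by rewrite hit_mem // avoid_mem // mul1r subr0.
(* off F, hit F n is nonnegative and its Laplacian nonpositive *)
rewrite -avoidS //; apply: mulr_ge0_le0; first by rewrite subr_ge0 avoid_le1.
by apply: mulr_ge0_le0; [exact/ltW | rewrite subr_le0 avoidSn_le].
Qed.

Definition test_fun (F K : seq V) (g : V -> R) :=
  [/\ uniq K, supported g K & forall x, x \in F -> g x = 1].

Lemma capf_seq F : uniq F ->
  cap F = \sum_(x <- F) cv c nbr x * escape c nbr [set` F] x.
Proof. by move=> uF; rewrite /capf -fsbig_seq. Qed.

Lemma capf_by_cvg F : uniq F -> capf_by F @ \oo --> cap F.
Proof.
move=> uF; rewrite /capf_by capf_seq //; apply: cvg_big; first exact: add_continuous.
by move=> x _; apply: cvgMl_tmp; apply: no_return_by_cvg.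
Qed.

Lemma lap_hit_cvg_mem F x : x \in F ->
  (fun n => lap (hit F n) x) @ \oo --> cv c nbr x * escape c nbr [set` F] x.
Proof.
move=> xF; under eq_cvg do rewrite lap_hit (avoid_mem _ xF) subr0.
by apply: cvgMl_tmp; apply: no_return_by_cvg.
Qed.

Lemma lap_hit_cvg_notin F x : x \notin F -> (fun n => lap (hit F n) x) @ \oo --> 0.
Proof.
move=> xF; rewrite -cvg_shiftS /=.
have -> : (fun n => lap (hit F n.+1) x) =
          (fun n => cv c nbr x * (nr F x n.+1 - nr F x n)).
  by apply/funext => n; rewrite lap_hit (avoidS _ xF).
suff : (fun n => cv c nbr x * (nr F x n.+1 - nr F x n)) @ \oo -->
       cv c nbr x * (escape c nbr [set` F] x - escape c nbr [set` F] x).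
  by rewrite subrr mulr0.
apply: cvgMl_tmp; apply: cvgB; last exact: no_return_by_cvg.
by rewrite cvg_shiftS; apply: no_return_by_cvg.
Qed.

Lemma dirichlet_hit_cvg F K g : uniq F -> test_fun F K g ->
  (fun n => dirichlet K g (hit F n)) @ \oo --> cap F.
Proof.
move=> uF [uK gK g1].
pose e x := g x * if x \in F then cv c nbr x * escape c nbr [set` F] x else 0.
have -> : cap F = \sum_(x <- K) e x.
  rewrite capf_seq // (eq_big_seq e) => [|x xF]; last by rewrite /e xF g1 ?mul1r.
  apply: big_uniq_supp => // y; rewrite /e; first by move/negbTE => ->; rewrite mulr0.
  by move/(supported_notin gK) ->; rewrite mul0r.
rewrite /dirichlet; apply: cvg_big; first exact: add_continuous.
move=> x _; apply: cvgMl_tmp; have [xF|xF] := boolP (x \in F).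
  exact: lap_hit_cvg_mem.
exact: lap_hit_cvg_notin.
Qed.

Lemma capf_le_energy F K g : uniq F -> test_fun F K g -> cap F <= energy K g.
Proof.
move=> uF gF; have [uK gK _] := gF.
(* 0 <= E (g - hit F n), where <g, lap (hit F n)> -> cap F
   and E (hit F n) <= capf_by F n -> cap F. *)
have energy_diff n : 2 * dirichlet K g (hit F n) - capf_by F n <= energy K g.
  pose K' := undup (K ++ undup (nbhd F n)).
  have uK' : uniq K' by rewrite undup_uniq.
  have gK' : supported g K' := supported_undup_catl _ gK.
  have hK' : supported (hit F n) K' := supported_undup_catr _ (@supported_hit F n).
  have := energy_ge0 uK' (supported_lincomb (a := 1) (b := -1) gK' hK').
  rewrite dirichlet_linl !dirichlet_linr (dirichlet_sym uK' hK' gK').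
  rewrite (dirichlet_supp_eq g uK' uK gK' gK).
  rewrite (dirichlet_supp_eq (hit F n) uK' uK gK' gK).
  rewrite (dirichlet_supp_eq (hit F n) uK' (undup_uniq _) hK' (@supported_hit F n)).
  have := energy_hit_le n uF; lra.
have lim : (fun n => 2 * dirichlet K g (hit F n) - capf_by F n) @ \oo -->
           2 * cap F - cap F.
  apply: cvgB; last exact: capf_by_cvg.
  by apply: cvgMl_tmp; apply: dirichlet_hit_cvg.
have : 2 * cap F - cap F <= energy K g.
  by apply: (ler_cvg_to lim (cvg_cst _)); apply: nearW.
lra.
Qed.

Lemma energy_near_capf F eta : uniq F -> 0 < eta ->
  exists K g, test_fun F K g /\ energy K g <= cap F + eta.
Proof.
move=> uF eta0.
have [N _ capN] : \forall n \near \oo, capf_by F n <= cap F + eta.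
  by apply: (cvgr_le _ (capf_by_cvg uF)); rewrite ltrDl.
exists (undup (nbhd F N)), (hit F N); split.
  split; [exact: undup_uniq | exact: supported_hit | by move=> x; apply: hit_mem].
exact: le_trans (energy_hit_le N uF) (capN N (leqnn N)).
Qed.

Lemma capf_subset F G : uniq F -> uniq G -> {subset F <= G} -> cap F <= cap G.
Proof.
move=> uF uG FG; apply/ler_addgt0Pr => eta eta0.
have [K [g [[uK gK g1] E]]] := energy_near_capf uG eta0.
apply: le_trans E; apply: capf_le_energy uF _.
by split => // x /FG; apply: g1.
Qed.

Lemma capf_le_Cap A s : uniq s -> [set` s] `<=` A -> ((cap s)%:E <= Cap c nbr A)%E.
Proof.
move=> us sA; rewrite /Cap; case: asboolP => [/finite_fsetP[X AX]|infA].
  rewrite lee_fin AX; apply: capf_subset us (fset_uniq X) _.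
  by move=> x xs; have := sA x xs; rewrite AX.
by apply: ereal_sup_ubound; exists [set` s] => //; split => //; apply: finite_seq.
Qed.

Lemma capf_parallelogram F B G K1 g1 K2 g2 :
  uniq F -> uniq B -> {subset F <= G} -> {subset B <= G} ->
  test_fun F K1 g1 -> test_fun G K2 g2 -> (forall x, x \in B -> x \notin K1) ->
  cap F + cap B / 4 <= (energy K1 g1 + energy K2 g2) / 2.
Proof.
move=> uF uB FG BG [uK1 g1K1 g1F] [uK2 g2K2 g2G] BK1.
pose K := undup (K1 ++ K2).
have uK : uniq K by rewrite undup_uniq.
have g1K : supported g1 K := supported_undup_catl _ g1K1.
have g2K : supported g2 K := supported_undup_catr _ g2K2.
have capF : cap F <= energy K (fun x => 2^-1 * g1 x + 2^-1 * g2 x).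
  apply: capf_le_energy uF _; split => //; first exact: supported_lincomb.
  by move=> x xF; rewrite g1F // g2G ?FG //; lra.
have capB : cap B <= energy K (fun x => (-1) * g1 x + 1 * g2 x).
  apply: capf_le_energy uB _; split => //; first exact: supported_lincomb.
  by move=> x xB; rewrite (supported_notin g1K1 (BK1 x xB)) g2G ?BG //; lra.
have := energy_parallelogram uK g1K g2K.
rewrite (dirichlet_supp_eq g1 uK uK1 g1K g1K1) (dirichlet_supp_eq g2 uK uK2 g2K g2K2).
lra.
Qed.

Lemma capf_unbounded (A : set V) (b : nat -> seq V) (delta M : R) :
  0 < delta -> (forall j, uniq (b j)) -> (forall j, [set` b j] `<=` A) ->
  (forall i j x, i != j -> x \in b i -> x \notin b j) ->
  (forall j, delta <= cap (b j)) ->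
  ~ (forall F, uniq F -> [set` F] `<=` A -> cap F <= M).
Proof.
move=> delta0 ub bA b_disj b_cap capM.
(* With eta = delta / 7 the parallelogram bound delta / 4 <= 3 eta / 2 fails. *)
have eta0 : 0 < delta / 7 by rewrite divr_gt0.
pose caps := [set cap F | F in [set F | uniq F /\ [set` F] `<=` A]].
have [_ [F [uF FA] <-] F_max] : exists2 e, caps e & forall e', caps e' -> e' <= e + delta / 7.
  apply: ubound_almost_max eta0; last by move=> _ [F [uF FA] <-]; apply: capM.
  by exists (cap [::]), [::]; rewrite // set_nil.
have [K1 [g1 [g1F E1]]] := energy_near_capf uF eta0.
have [J bJ] := eventually_disjoint K1 b_disj.
pose G := undup (F ++ b J).
have FG : {subset F <= G} by move=> x xF; rewrite mem_undup mem_cat xF.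
have bG : {subset b J <= G} by move=> x xb; rewrite mem_undup mem_cat xb orbT.
have uG : uniq G by rewrite undup_uniq.
have capG : cap G <= cap F + delta / 7.
  apply: F_max; exists G => //; split => // x /=.
  by rewrite mem_undup mem_cat => /orP[/FA | /(bA J)].
have [K2 [g2 [g2G E2]]] := energy_near_capf uG eta0.
have bK1 x : x \in b J -> x \notin K1.
  by move=> xb; apply/negP => /(bJ J (leqnn J)); rewrite xb.
have := capf_parallelogram uF (ub J) FG bG g1F g2G bK1.
have := b_cap J; lra.
Qed.

Lemma Cap_eq_pinfty A (b : nat -> seq V) delta :
  0 < delta -> (forall j, uniq (b j)) -> (forall j, [set` b j] `<=` A) ->
  (forall i j x, i != j -> x \in b i -> x \notin b j) ->
  (forall j, delta <= cap (b j)) -> Cap c nbr A = +oo%E.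
Proof.
move=> delta0 ub bA b_disj b_cap.
case E: (Cap c nbr A) => [M| |] //.
  have [] := capf_unbounded delta0 ub bA b_disj b_cap (M := M) => F uF FA.
  by have := capf_le_Cap (A := A) uF FA; rewrite E lee_fin.
have nilA : [set` [::]] `<=` A by rewrite set_nil; apply: sub0set.
by have := capf_le_Cap (s := [::]) isT nilA; rewrite E capf_nil.
Qed.

End Transition.
End Network.

Unset Implicit Arguments.

Theorem lemma2p13 (R : realType) (V : choiceType)
  (c : V -> V -> R) (nbr : V -> seq V)
  (Hnet : is_network c nbr) (Htr : transient c nbr)
  (A : set V) (eps : R) (Heps : 0 < eps) (As : nat -> set V)
  (Hsub : forall i, As i `<=` A)
  (Hdisj : forall i j, i <> j -> As i `&` As j = set0)
  (Hcap : forall i, (eps%:E <= Cap c nbr (As i))%E) :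
  Cap c nbr A = +oo%E.
Proof.
have cap_half i : ((eps / 2)%:E < Cap c nbr (As i))%E.
  by apply: lt_le_trans (Hcap i); rewrite lte_fin; lra.
have [b bP] := choice (fun i => Cap_inner_approx (cap_half i)).
have b_disj i j x : i != j -> x \in b i -> x \notin b j.
  move=> /eqP ij xi; apply/negP => xj; have [_ bi _] := bP i; have [_ bj _] := bP j.
  have : (As i `&` As j) x by split; [apply: bi | apply: bj].
  by rewrite Hdisj.
have b_elt i : exists x, x \in b i.
  have [_ _] := bP i; case: (b i) => [|x s _]; last by exists x; rewrite mem_head.
  by rewrite capf_nil; lra.
have [[a0 a0b] [a1 a1b]] := (b_elt 0%N, b_elt 1%N).
have cv_pos x : 0 < cv c nbr x.
  have [y xy] : exists y, x != y.
    have [->|] := eqVneq x a0; last by exists a0.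
    by exists a1; apply/eqP => a01; have := b_disj 0%N 1%N a0 isT a0b; rewrite a01 a1b.
  by apply: (cv_gt0 Hnet (y := y)); apply/eqP.
apply: (Cap_eq_pinfty Hnet cv_pos (delta := eps / 2) (b := b)) => //.
- by rewrite divr_gt0.
- by move=> j; have [] := bP j.
- by move=> j x xb; have [_ bj _] := bP j; apply: (Hsub j); apply: bj.
- by move=> j; have [_ _ /ltW] := bP j.
Qed.
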